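(* Let $n\ge1$ and let $Q,Q'$ be key polynomials for $\nu$ of degree $n$ with $\nu(Q)<\nu(Q')$. For $f\in K[x]$ let $f=\sum_{i=0}^rf_iQ'^i$ be the $Q'$-expansion of $f$. Then \[ \nu_Q(f)=\min_{0\le i\le r}\nu_Q(f_iQ'^i). \]
   Context: Let $K$ be a field and $\nu$ a rank one valuation on $K[x]$ (values in $\mathbb{R}\cup\{\infty\}$). For $f\in K[x]$ and $b\ge 0$, $\partial_bf$ denotes the $b$-th Hasse derivative of $f$ (defined by $f(x+y)=\sum_b\partial_bf(x)y^b$). For nonconstant $f$ set $\epsilon(f)=\max_{1\le b\le\deg f}\frac{\nu(f)-\nu(\partial_bf)}{b}$ (with $\epsilon(c)=-\infty$ for constants $c$). A monic $Q\in K[x]$ is a key polynomial for $\nu$ if for every $f\in K[x]$, $\epsilon(f)\ge\epsilon(Q)$ implies $\deg f\ge\deg Q$. For a monic $Q$ of degree $n\ge1$, every $f\in K[x]$ has a unique $Q$-expansion $f=\sum_{i=0}^ra_iQ^i$ with $\deg a_i<n$, and the truncation is $\nu_Q(f)=\min_i\nu(a_iQ^i)$. *)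

From HB Require Import structures.
From mathcomp Require Import all_boot all_order all_algebra.
From mathcomp Require Import reals constructive_ereal.
Set Implicit Arguments. Unset Strict Implicit. Unset Printing Implicit Defensive.
Import Order.TTheory GRing.Theory Num.Theory.
Local Open Scope ring_scope.
Local Open Scope ereal_scope.

Section Defs.
Variables (K : fieldType) (R : realType).
Implicit Types (nu : {poly K} -> \bar R) (f Q : {poly K}).

Definition is_valuation nu : Prop :=
  [/\ nu 0%R = +oo, nu 1%R = 0,
      (forall f g, nu (f * g)%R = nu f + nu g),
      (forall f g, mine (nu f) (nu g) <= nu (f + g)%R) &
      (forall f, f != 0%R -> nu f \is a fin_num)].

(* epsilon(f) = max_{1 <= b <= deg f} (nu f - nu (d_b f)) / b, where d_b is the
   b-th Hasse derivative (mathcomp's normalized derivative p^`N(b)).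
   The empty max is -oo, so epsilon(c) = -oo for constants c. *)
Definition epsilon nu f : \bar R :=
  \big[maxe/-oo]_(1 <= b < size f)
     ((nu f - nu (f^`N(b))) * ((b%:R : R)^-1)%:E).

Definition key_poly nu Q : Prop :=
  Q \is monic /\
  forall f, epsilon nu Q <= epsilon nu f -> (size Q <= size f)%N.

(* i-th coefficient of the Q-expansion f = \sum_i a_i Q^i (deg a_i < deg Q). *)
Definition qexp Q f (i : nat) : {poly K} := (f %/ Q ^+ i) %% Q.

(* truncation nu_Q(f) = min_i nu(a_i Q^i); indices i >= size f give a_i = 0. *)
Definition trunc nu Q f : \bar R :=
  \big[mine/+oo]_(i < size f) nu (qexp Q f i * Q ^+ i)%R.

End Defs.

From HB Require Import structures.
From mathcomp Require Import all_boot all_order all_algebra.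
From mathcomp Require Import reals constructive_ereal.
From mathcomp Require Import ring lra zify.
Import Order.TTheory GRing.Theory Num.Theory.

Set Implicit Arguments. Unset Strict Implicit. Unset Printing Implicit Defensive.
Local Open Scope ring_scope.

(* Write Q' = Q + h, where deg h < deg Q because both are monic of the same
   degree, and nu h >= nu Q.  The engine is a property of the key polynomial Q:
   for a, c of degree < deg Q the remainder of a * c modulo Q has the value of
   a * c, and the quotient part (a * c %/ Q) * Q a strictly larger one.  Were
   it otherwise, the b-th Hasse derivative of the remainder, for a b realising
   epsilon(Q), would give epsilon(remainder) >= epsilon(Q) in degree < deg Q.
   Expanding g * (Q + h)^i in powers of Q with this rule, its i-th Q-digit is g
   up to terms of larger value and every digit weighs at least nu (g Q^i),
   strictly so beyond index i; hence nu_Q (g Q'^i) = nu (g Q^i).  In a sum of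
   such terms, the digit at the largest index attaining min_i nu (g_i Q^i)
   suffers no cancellation, so nu_Q of the sum is that minimum.  Applied to the
   Q'-expansion of f this is the statement. *)

Section HasseLeibniz.
Variable R : comNzRingType.
Implicit Types p q : {poly R}.

(* p(x + y) as a polynomial in y over R[x]: its coefficients are the Hasse
   derivatives of p. *)
Local Notation taylor p := (((p^:P)^:P).[('X)%:P + 'X]).

Lemma coef_taylor p i : (taylor p)`_i = p^`N(i).
Proof.
rewrite nderiv_taylor; last exact: mulrC.
rewrite coef_sum.
have term_coef (j : nat) :
    ((((p^:P)^:P)^`N(j)).[('X : {poly R})%:P] * 'X^j)`_i = if i == j then p^`N(j) else 0.
  rewrite !nderivn_map horner_map /= [_.['X]]comp_polyXr coefCM coefXn.
  by case: eqP => _; rewrite ?mulr1 ?mulr0.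
have [lt|ge] := ltnP i (size ((p^:P)^:P)).
  rewrite (bigD1 (Ordinal lt)) //= big1 ?addr0; first by rewrite term_coef eqxx.
  move=> j /negbTE nj; rewrite term_coef; case: eqP => [e|] //.
  by move: nj; rewrite -(inj_eq val_inj) /= e eqxx.
rewrite big1; last first.
  move=> j _; rewrite term_coef; case: eqP => [e|] //.
  by move: (ltn_ord j); rewrite -e ltnNge ge.
by rewrite nderivn_poly0 // -(size_map_polyC p) -(size_map_polyC (p^:P)).
Qed.

Lemma nderivnM p q j : (p * q)^`N(j) = \sum_(k < j.+1) p^`N(k) * q^`N(j - k).
Proof.
rewrite -coef_taylor !rmorphM /= hornerM coefM.
by apply: eq_bigr => k _; rewrite !coef_taylor.
Qed.

Lemma nderivn_lead p : p^`N((size p).-1) = (lead_coef p)%:P.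
Proof.
apply/polyP => i; rewrite coef_nderivn coefC.
case: i => [|i] /=; first by rewrite addn0 binn.
by rewrite nth_default ?mul0rn //; lia.
Qed.

End HasseLeibniz.

Lemma size_sub_monic (R : nzRingType) (p q : {poly R}) :
  p \is monic -> q \is monic -> size p = size q -> (size (p - q)%R < size p)%N.
Proof.
move=> mp mq spq; have p0 : (0 < size p)%N by rewrite size_poly_gt0 monic_neq0.
rewrite -(prednK p0) ltnS; apply/leq_sizeP => j hj; rewrite coefB.
have [->|jn] := eqVneq j (size p).-1.
  by rewrite -/(lead_coef p) spq -/(lead_coef q) (monicP mp) (monicP mq) subrr.
have sp_j : (size p <= j)%N by rewrite -(prednK p0) ltn_neqAle eq_sym jn hj.
by rewrite !nth_default ?subrr -?spq.
Qed.

Lemma modp_subdivp (K : fieldType) (p d : {poly K}) : p %% d = p - p %/ d * d.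
Proof. by apply/eqP; rewrite eq_sym subr_eq addrC -divp_eq. Qed.

Section QExpansion.
Variables (K : fieldType) (Q : {poly K}).
Hypothesis Qsize : (1 < size Q)%N.
Implicit Types (f g P a c h : {poly K}).

Let Q_neq0 : Q != 0. Proof. by rewrite -size_poly_gt0 ltnW. Qed.

Lemma size_divp_mul_lt a c : (size a < size Q)%N -> (size c < size Q)%N ->
  (size (a * c %/ Q)%R < size Q)%N.
Proof.
move=> sa sc; rewrite size_divp //.
apply: leq_ltn_trans (leq_sub2r _ (size_polyMleq a c)) _.
by move: sa sc Qsize; move: (size a) (size c) (size Q) => x y z; lia.
Qed.

Lemma divp_mul_small P h : (size h < size Q)%N -> P * h %/ Q = P %/ Q * h + P %% Q * h %/ Q.
Proof.
move=> sh; have -> : P * h = (P %/ Q * h + P %% Q * h %/ Q) * Q + P %% Q * h %% Q.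
  by rewrite mulrDl -addrA -divp_eq {1}(divp_eq P Q) mulrDl mulrAC.
by rewrite divp_addl_mul_small // ltn_modp.
Qed.

Lemma qexp0p k : qexp Q 0 k = 0.
Proof. by rewrite /qexp div0p mod0p. Qed.

Lemma qexp0 f : qexp Q f 0 = f %% Q.
Proof. by rewrite /qexp expr0 divp1. Qed.

Lemma qexpS f k : qexp Q f k.+1 = qexp Q (f %/ Q) k.
Proof. by rewrite /qexp divp_divl exprS. Qed.

Lemma qexpD f g k : qexp Q (f + g) k = qexp Q f k + qexp Q g k.
Proof. by rewrite /qexp divpD modpD. Qed.

Lemma qexp_sum (I : Type) (r : seq I) (p : pred I) (F : I -> {poly K}) k :
  qexp Q (\sum_(i <- r | p i) F i) k = \sum_(i <- r | p i) qexp Q (F i) k.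
Proof. by elim/big_rec2: _ => [|i y1 y2 _ <-]; rewrite ?qexp0p ?qexpD. Qed.

Lemma size_qexp f k : (size (qexp Q f k) < size Q)%N.
Proof. by rewrite ltn_modp. Qed.

Lemma qexp_small c k : (size c < size Q)%N -> qexp Q c k = if k == 0%N then c else 0.
Proof.
move=> sc; case: k => [|k]; first by rewrite qexp0 modp_small.
by rewrite qexpS divp_small ?qexp0p.
Qed.

Lemma divp_expQ_small f k : (size f <= k)%N -> f %/ Q ^+ k = 0.
Proof.
move=> sf; rewrite divp_small //.
have := size_exp Q k; have : (0 < size (Q ^+ k))%N by rewrite size_poly_gt0 expf_neq0.
by move: sf Qsize; move: (size f) (size Q) (size (Q ^+ k)) => x y z; nia.
Qed.

Lemma qexp_big f k : (size f <= k)%N -> qexp Q f k = 0.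
Proof. by move=> sf; rewrite /qexp divp_expQ_small ?mod0p. Qed.

Lemma qexp_mulQ f k : qexp Q (f * Q) k = if k is k'.+1 then qexp Q f k' else 0.
Proof. by case: k => [|k]; rewrite ?qexp0 ?modp_mull // qexpS mulpK. Qed.

Lemma qexp_mul_small P h k : (size h < size Q)%N ->
  qexp Q (P * h) k = qexp Q P k * h %% Q + (if k is k'.+1 then qexp Q P k' * h %/ Q else 0).
Proof.
move=> sh; elim: k P => [|k IH] P; first by rewrite !qexp0 addr0 [in RHS]mulrC modp_mul mulrC.
have sPQ : (size (P %% Q)%R < size Q)%N by rewrite ltn_modp.
rewrite qexpS divp_mul_small // qexpD IH (qexp_small k (size_divp_mul_lt sPQ sh)).
by case: k {IH} => [|k] /=; rewrite ?qexpS ?qexp0 ?addr0.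
Qed.

Lemma qexp_mulDQ P h k : (size h < size Q)%N ->
  qexp Q (P * (Q + h)) k =
  qexp Q P k * h %% Q + (if k is k'.+1 then qexp Q P k' + qexp Q P k' * h %/ Q else 0).
Proof.
move=> sh; rewrite mulrDr qexpD qexp_mulQ qexp_mul_small //.
by case: k => [|k]; rewrite ?add0r ?addr0 // addrCA.
Qed.

Lemma qexp_expansion_upto f N :
  f = \sum_(i < N) qexp Q f i * Q ^+ i + f %/ Q ^+ N * Q ^+ N.
Proof.
elim: N => [|N IH]; first by rewrite big_ord0 add0r expr0 divp1 mulr1.
rewrite big_ord_recr /= {1}IH -addrA; congr (_ + _).
by rewrite {1}(divp_eq (f %/ Q ^+ N) Q) divp_divl -exprSr exprS /qexp mulrDl addrC mulrA.
Qed.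

Lemma qexp_expansion f : f = \sum_(i < size f) qexp Q f i * Q ^+ i.
Proof. by rewrite {1}(qexp_expansion_upto f (size f)) divp_expQ_small // mul0r addr0. Qed.

End QExpansion.

Local Open Scope ereal_scope.

Section Valuation.
Variables (K : fieldType) (R : realType) (nu : {poly K} -> \bar R).
Hypothesis nu_val : is_valuation nu.
Implicit Types (p q : {poly K}) (x : \bar R).

Lemma val0 : nu 0%R = +oo. Proof. by case: nu_val. Qed.
Lemma val1 : nu 1%R = 0. Proof. by case: nu_val. Qed.
Lemma valM p q : nu (p * q)%R = nu p + nu q. Proof. by case: nu_val. Qed.
Lemma valD_ge_min p q : mine (nu p) (nu q) <= nu (p + q)%R. Proof. by case: nu_val. Qed.
Lemma val_fin_num p : p != 0%R -> nu p \is a fin_num.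
Proof. by case: nu_val => _ _ _ _; apply. Qed.

Definition valr p : R := fine (nu p).

Lemma valrE p : p != 0%R -> nu p = (valr p)%:E.
Proof. by move=> /val_fin_num /fineK. Qed.

Lemma valN p : nu (- p)%R = nu p.
Proof.
suff valN1 : nu (-1)%R = 0 by rewrite -mulN1r valM valN1 add0e.
have : nu (-1)%R \is a fin_num by rewrite val_fin_num // oppr_eq0 oner_eq0.
have : nu (-1)%R + nu (-1)%R = 0 by rewrite -valM mulrNN mulr1 val1.
case: (nu (-1)%R) => // r /eqP; rewrite -EFinD eqe -mulr2n -mulr_natr.
by rewrite mulf_eq0 pnatr_eq0 orbF => /eqP ->.
Qed.

Lemma le_valD x p q : x <= nu p -> x <= nu q -> x <= nu (p + q)%R.
Proof. by move=> hp hq; apply: le_trans (valD_ge_min p q); rewrite le_min hp hq. Qed.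

Lemma lt_valD x p q : x < nu p -> x < nu q -> x < nu (p + q)%R.
Proof. by move=> hp hq; apply: lt_le_trans (valD_ge_min p q); rewrite lt_min hp hq. Qed.

Lemma le_valB x p q : x <= nu p -> x <= nu q -> x <= nu (p - q)%R.
Proof. by move=> hp hq; apply: le_valD; rewrite ?valN. Qed.

Lemma le_val_sum (I : Type) (r : seq I) (P : pred I) (F : I -> {poly K}) x :
  (forall i, P i -> x <= nu (F i)) -> x <= nu (\sum_(i <- r | P i) F i)%R.
Proof.
move=> h; elim/big_ind: _ => //; first by rewrite val0 leey.
by move=> ? ? ? ?; apply: le_valD.
Qed.

Lemma lt_val_sum (I : Type) (r : seq I) (P : pred I) (F : I -> {poly K}) x :
  x < +oo -> (forall i, P i -> x < nu (F i)) -> x < nu (\sum_(i <- r | P i) F i)%R.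
Proof.
move=> xoo h; elim/big_ind: _ => //; first by rewrite val0.
by move=> ? ? ? ?; apply: lt_valD.
Qed.

Lemma valD_lt_eq p q : nu p < nu q -> nu (p + q)%R = nu p.
Proof.
move=> lt; apply/le_anti; rewrite le_valD ?(ltW lt) // andbT.
have := valD_ge_min (p + q)%R (- q)%R; rewrite addrK valN ge_min => /orP[//|le_qpq].
by have := le_lt_trans le_qpq lt; rewrite ltxx.
Qed.

End Valuation.

Section Epsilon.
Variables (K : fieldType) (R : realType) (nu : {poly K} -> \bar R).
Hypothesis nu_val : is_valuation nu.
Implicit Types (g : {poly K}) (b : nat) (c : R).
Local Notation valr := (valr nu).

Definition eps_term g b : \bar R := (nu g - nu (g^`N(b))) * ((b%:R : R)^-1)%:E.

Lemma eps_term_le g b : (1 <= b < size g)%N -> eps_term g b <= epsilon nu g.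
Proof.
move=> hb; apply: (@le_bigmax_seq _ _ _ _ _ b xpredT (eps_term g)) => //.
by rewrite mem_index_iota.
Qed.

Lemma epsilon_attained g : (1 < size g)%N ->
  exists2 b, (1 <= b < size g)%N & epsilon nu g = eps_term g b.
Proof.
rewrite /epsilon; elim: (size g) => // N IH hN.
rewrite big_nat_recr /=; last by case: (N) hN.
have [->|N1] := eqVneq N 1%N; first by rewrite big_geq // maxEle leNye; exists 1%N.
have N2 : (1 < N)%N by move: hN N1; case: (N) => [|[]].
have [b hb ->] := IH N2.
rewrite maxEle; case: ifP => _; first by exists N => //; rewrite leqnn andbT ltnW.
by exists b => //; case/andP: hb => -> /= /ltnW; rewrite ltnS.
Qed.

Lemma eps_termE g b : g != 0%R -> (0 < b)%N -> g^`N(b) != 0%R ->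
  eps_term g b = ((valr g - valr (g^`N(b))) / b%:R)%:E.
Proof.
by move=> g0 b0 gb0; rewrite /eps_term (valrE nu_val g0) (valrE nu_val gb0) -EFinB -EFinM.
Qed.

Lemma eps_term_nderivn0 g b : g != 0%R -> (0 < b)%N -> g^`N(b) = 0%R ->
  eps_term g b = -oo.
Proof.
move=> g0 b0 gb0; rewrite /eps_term gb0 val0 // (valrE nu_val g0) /= gt0_mulNye //.
by rewrite lte_fin invr_gt0 ltr0n.
Qed.

Lemma val_nderivn_eq g b c : g != 0%R -> (0 < b)%N -> eps_term g b = c%:E ->
  nu (g^`N(b)) = (valr g - b%:R * c)%:E.
Proof.
move=> g0 b0; have [gb0|gb0] := eqVneq (g^`N(b)) 0%R.
  by rewrite eps_term_nderivn0.
rewrite eps_termE // => -[<-]; rewrite (valrE nu_val gb0); congr EFin.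
by field; rewrite pnatr_eq0 -lt0n.
Qed.

Lemma val_nderivn_ge g b c : g != 0%R -> epsilon nu g <= c%:E ->
  (valr g - b%:R * c)%:E <= nu (g^`N(b)).
Proof.
move=> g0 epsc; case: b => [|b]; first by rewrite nderivn0 (valrE nu_val g0) mul0r subr0.
have [gb0|gb0] := eqVneq (g^`N(b.+1)) 0%R; first by rewrite gb0 val0 ?leey.
have [bs|sb] := ltnP b.+1 (size g); last by rewrite nderivn_poly0 ?eqxx in gb0.
have := le_trans (eps_term_le (_ : (1 <= b.+1 < size g)%N)) epsc; rewrite bs => /(_ isT).
rewrite eps_termE // (valrE nu_val gb0) !lee_fin ler_pdivrMr ?ltr0n // => h.
by rewrite mulrC; lra.
Qed.

Lemma val_nderivn_gt g b c : g != 0%R -> (0 < b)%N -> epsilon nu g < c%:E ->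
  (valr g - b%:R * c)%:E < nu (g^`N(b)).
Proof.
move=> g0 b0 epsc; have [gb0|gb0] := eqVneq (g^`N(b)) 0%R; first by rewrite gb0 val0 ?ltey.
have [bs|sb] := ltnP b (size g); last by rewrite nderivn_poly0 ?eqxx in gb0.
have := le_lt_trans (eps_term_le (_ : (1 <= b < size g)%N)) epsc; rewrite b0 bs => /(_ isT).
rewrite eps_termE // (valrE nu_val gb0) !lte_fin ltr_pdivrMr ?ltr0n // => h.
by rewrite mulrC; lra.
Qed.

End Epsilon.

Section KeyPolynomial.
Variables (K : fieldType) (R : realType) (nu : {poly K} -> \bar R).
Hypothesis nu_val : is_valuation nu.
Variable Q : {poly K}.
Hypotheses (Qkey : key_poly nu Q) (Qsize : (1 < size Q)%N).
Implicit Types (a c d f g q P : {poly K}) (b : nat) (x : \bar R).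
Local Notation valr := (valr nu).
Local Notation eQ := (fine (epsilon nu Q)).

Let Q_neq0 : Q != 0%R. Proof. by rewrite -size_poly_gt0 ltnW. Qed.

Lemma epsilon_lt_key g : (size g < size Q)%N -> epsilon nu g < epsilon nu Q.
Proof. by move=> sg; rewrite ltNge; apply: contraTN sg => /(proj2 Qkey); rewrite -leqNgt. Qed.

Lemma epsilon_key_fin : epsilon nu Q \is a fin_num.
Proof.
set n := (size Q).-1.
have Qn : Q^`N(n) = 1%R by rewrite nderivn_lead (monicP (proj1 Qkey)).
have n0 : (0 < n)%N by rewrite /n; lia.
have : eps_term nu Q n <= epsilon nu Q by apply: eps_term_le; rewrite /n; lia.
rewrite eps_termE // ?Qn ?oner_eq0 //.
have [b /andP[b1 _] ->] := epsilon_attained nu Qsize.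
have [Qb0|Qb0] := eqVneq (Q^`N(b)) 0%R; last by rewrite eps_termE.
by rewrite eps_term_nderivn0 // leeNy_eq.
Qed.

Lemma epsilon_keyE : epsilon nu Q = eQ%:E.
Proof. by rewrite fineK // epsilon_key_fin. Qed.

Lemma val_nderivn_small_gt g b : (size g < size Q)%N -> g != 0%R -> (0 < b)%N ->
  (valr g - b%:R * eQ)%:E < nu (g^`N(b)).
Proof. by move=> sg g0 b0; apply: val_nderivn_gt; rewrite // -epsilon_keyE epsilon_lt_key. Qed.

Lemma val_nderivn_small_ge g b : (size g < size Q)%N -> g != 0%R ->
  (valr g - b%:R * eQ)%:E <= nu (g^`N(b)).
Proof.
by move=> sg g0; apply: val_nderivn_ge; rewrite // -epsilon_keyE ltW ?epsilon_lt_key.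
Qed.

Lemma val_nderivn_mul_small a c j : (size a < size Q)%N -> (size c < size Q)%N ->
  a != 0%R -> c != 0%R -> (0 < j)%N ->
  (valr a + valr c - j%:R * eQ)%:E < nu ((a * c)^`N(j)).
Proof.
move=> sa sc a0 c0 j0; rewrite nderivnM; apply: lt_val_sum; rewrite ?ltry //.
move=> -[[|k] hk] _ /=; rewrite valM //.
  rewrite nderivn0 subn0 (valrE nu_val a0).
  have -> : (valr a + valr c - j%:R * eQ = valr a + (valr c - j%:R * eQ))%R by ring.
  by rewrite EFinD lee_ltD // val_nderivn_small_gt.
have -> : (valr a + valr c - j%:R * eQ =
    (valr a - k.+1%:R * eQ) + (valr c - (j - k.+1)%:R * eQ))%R by rewrite natrB //; ring.
by rewrite EFinD lte_leD // ?val_nderivn_small_gt ?val_nderivn_small_ge.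
Qed.

Lemma val_nderivn_mulQ q b : (size q < size Q)%N -> q != 0%R -> (0 < b)%N ->
  eps_term nu Q b = epsilon nu Q ->
  nu ((q * Q)^`N(b)) = (valr q + valr Q - b%:R * eQ)%:E.
Proof.
move=> sq q0 b0 epsb.
have Qb : nu (Q^`N(b)) = (valr Q - b%:R * eQ)%:E.
  by apply: val_nderivn_eq; rewrite // ?Q_neq0 // epsb epsilon_keyE.
have lead : nu (q * Q^`N(b))%R = (valr q + valr Q - b%:R * eQ)%:E.
  by rewrite valM // (valrE nu_val q0) Qb -EFinD addrA.
rewrite nderivnM big_ord_recl /= nderivn0 subn0 valD_lt_eq // lead.
apply: lt_val_sum; rewrite ?ltry // => i _; rewrite /bump /= add1n valM //.
have -> : (valr q + valr Q - b%:R * eQ =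
    (valr q - i.+1%:R * eQ) + (valr Q - (b - i.+1)%:R * eQ))%R by rewrite natrB //; ring.
rewrite EFinD lte_leD // ?val_nderivn_small_gt //.
by apply: val_nderivn_ge; rewrite ?Q_neq0 // epsilon_keyE.
Qed.

Lemma val_lt_divpK a c : (size a < size Q)%N -> (size c < size Q)%N -> (a * c != 0)%R ->
  nu (a * c)%R < nu (a * c %/ Q * Q)%R.
Proof.
move=> sa sc ac0; set q := (a * c %/ Q)%R; set r := (a * c %% Q)%R.
have a0 : a != 0%R by apply: contraNneq ac0 => ->; rewrite mul0r.
have c0 : c != 0%R by apply: contraNneq ac0 => ->; rewrite mulr0.
rewrite ltNge; apply/negP => le_qQ_ac.
have q0 : q != 0%R.
  by apply: contraTneq le_qQ_ac => ->; rewrite mul0r val0 // leye_eq (valrE nu_val ac0).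
have sq : (size q < size Q)%N by exact: size_divp_mul_lt.
have valqQ : nu (q * Q)%R = (valr q + valr Q)%:E.
  by rewrite valM // (valrE nu_val q0) (valrE nu_val Q_neq0).
have le_qQ_ac' : (valr q + valr Q <= valr a + valr c)%R.
  by move: le_qQ_ac; rewrite valqQ valM // (valrE nu_val a0) (valrE nu_val c0).
have [b /andP[b0 _] epsb] := epsilon_attained nu Qsize.
set X := (valr q + valr Q - b%:R * eQ)%R.
have val_qQb : nu ((q * Q)^`N(b)) = X%:E by apply: val_nderivn_mulQ.
have lt_acb : X%:E < nu ((a * c)^`N(b)).
  by apply: le_lt_trans (val_nderivn_mul_small sa sc a0 c0 b0); rewrite lee_fin /X; lra.
have rE : r = (a * c - q * Q)%R by exact: modp_subdivp.
have val_rb : nu (r^`N(b)) = X%:E.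
  by rewrite rE nderivnB addrC valD_lt_eq // valN // val_qQb.
have rb0 : r^`N(b) != 0%R by apply: contra_eq_neq val_rb => ->; rewrite val0.
have r0 : r != 0%R by apply: contraNneq rb0 => ->; rewrite nderivn_poly0 ?size_poly0.
have br : (b < size r)%N by rewrite ltnNge; apply: contra rb0 => /nderivn_poly0 ->.
have le_qQ_r : (valr q + valr Q <= valr r)%R.
  rewrite -lee_fin -(valrE nu_val r0) -valqQ rE.
  by apply: le_valB => //; rewrite valM // ?valqQ ?(valrE nu_val a0) ?(valrE nu_val c0) lee_fin.
have : epsilon nu Q <= epsilon nu r.
  apply: le_trans (eps_term_le nu (_ : (1 <= b < size r)%N)); rewrite ?b0 ?br //.
  rewrite epsilon_keyE eps_termE // /valr val_rb /= lee_fin.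
  by rewrite -/(valr r) ler_pdivlMr ?ltr0n // /X; lra.
by move/(proj2 Qkey); rewrite leqNgt ltn_modp Q_neq0.
Qed.

Lemma val_le_modp a c : (size a < size Q)%N -> (size c < size Q)%N ->
  nu (a * c)%R <= nu (a * c %% Q)%R.
Proof.
move=> sa sc; have [->|ac0] := eqVneq (a * c)%R 0%R; first by rewrite mod0p.
by rewrite modp_subdivp le_valB // ltW // val_lt_divpK.
Qed.

Lemma trunc_le_val f k : trunc nu Q f <= nu (qexp Q f k * Q ^+ k)%R.
Proof.
have [kf|fk] := ltnP k (size f); last by rewrite qexp_big // mul0r val0 ?leey.
exact: (bigmin_le _ (Ordinal kf) (fun i : 'I_(size f) => nu (qexp Q f i * Q ^+ i)%R)).
Qed.

Lemma le_trunc x f : (forall k, x <= nu (qexp Q f k * Q ^+ k)%R) -> x <= trunc nu Q f.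
Proof. by move=> le_x; apply: le_bigmin => [|i _]; [exact: leey | exact: le_x]. Qed.

Lemma trunc0 : trunc nu Q 0%R = +oo.
Proof. by rewrite /trunc size_poly0 big_ord0. Qed.

Lemma val_mul_expQ_fin d k : d != 0%R -> nu (d * Q ^+ k)%R \is a fin_num.
Proof. by move=> d0; rewrite val_fin_num // mulf_neq0 ?expf_neq0. Qed.

Lemma val_mulQS d k : nu (d * Q ^+ k.+1)%R = nu (d * Q ^+ k)%R + nu Q.
Proof. by rewrite exprSr mulrA valM. Qed.

Variable h : {poly K}.
Hypotheses (hsize : (size h < size Q)%N) (Q_le_h : nu Q <= nu h).

Lemma val_modp_mulh d k : (size d < size Q)%N ->
  nu (d * Q ^+ k)%R + nu Q <= nu (d * h %% Q * Q ^+ k)%R.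
Proof.
move=> sd; rewrite !valM // addeAC; apply: leeD2r.
by apply: le_trans (val_le_modp sd hsize); rewrite valM // leeD2l.
Qed.

Lemma val_divp_mulh x d k : (size d < size Q)%N -> x \is a fin_num ->
  x <= nu (d * Q ^+ k)%R -> x + nu Q < nu (d * h %/ Q * Q ^+ k.+1)%R.
Proof.
move=> sd xfin le_x; have [dh0|dh0] := eqVneq (d * h)%R 0%R.
  have /fin_numP[_ ?] : x + nu Q \is a fin_num by rewrite fin_numD xfin val_fin_num.
  by rewrite dh0 div0p mul0r val0 // ltey.
rewrite exprS mulrA valM //; apply: (@le_lt_trans _ _ (nu (d * h)%R + nu (Q ^+ k))).
  by apply: le_trans (leeD2r _ le_x) _; rewrite !valM // addeAC leeD2r // leeD2l.
by rewrite lteD2rE ?val_fin_num ?expf_neq0 // val_lt_divpK.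
Qed.

Definition leading_qexp g i P : Prop :=
  [/\ forall k, nu (g * Q ^+ i)%R <= nu (qexp Q P k * Q ^+ k)%R,
      forall k, (i < k)%N -> nu (g * Q ^+ i)%R < nu (qexp Q P k * Q ^+ k)%R &
      nu (g * Q ^+ i)%R < nu ((qexp Q P i - g) * Q ^+ i)%R].

Lemma leading_qexp0 g : (size g < size Q)%N -> g != 0%R -> leading_qexp g 0 g.
Proof.
move=> sg g0; have /fin_numP[_ gfin] := val_fin_num nu_val g0.
rewrite /leading_qexp expr0 mulr1; split => [k|k k0|]; rewrite qexp_small //.
- by case: k => [|k] /=; rewrite ?expr0 ?mulr1 // mul0r val0 ?leey.
- by rewrite lt0n in k0; rewrite (negPf k0) mul0r val0 // ltey.
- by rewrite eqxx subrr mul0r val0 // ltey.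
Qed.

Lemma leading_qexpM g i P : g != 0%R -> leading_qexp g i P ->
  leading_qexp g i.+1 (P * (Q + h))%R.
Proof.
move=> g0 [ge gt approx]; set B := nu (g * Q ^+ i)%R.
have Bfin : B \is a fin_num by exact: val_mul_expQ_fin.
have QB : nu Q \is a fin_num by exact: val_fin_num.
have sd k : (size (qexp Q P k) < size Q)%N by exact: size_qexp.
rewrite /leading_qexp val_mulQS -/B; split => [k|k|].
- rewrite qexp_mulDQ //; case: k => [|k]; rewrite ?addr0 ?mulrDl.
    exact: le_trans (leeD2r _ (ge _)) (val_modp_mulh _ (sd _)).
  apply: (le_valD nu_val); [exact: le_trans (leeD2r _ (ge _)) (val_modp_mulh _ (sd _))|].
  apply: (le_valD nu_val); first by rewrite val_mulQS leeD2r.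
  exact/ltW/val_divp_mulh.
- case: k => [|k] // ik; rewrite qexp_mulDQ // !mulrDl.
  apply: (lt_valD nu_val).
    by apply: lt_le_trans (val_modp_mulh _ (sd _)); rewrite lteD2rE // gt // ltnW.
  apply: (lt_valD nu_val); first by rewrite val_mulQS lteD2rE // gt.
  exact: val_divp_mulh.
- have regroup (u v w : {poly K}) : (u + (v + w) - g = v - g + u + w)%R by ring.
  rewrite qexp_mulDQ // regroup 2!mulrDl; apply: (lt_valD nu_val).
  apply: (lt_valD nu_val); first by rewrite val_mulQS lteD2rE.
  by apply: lt_le_trans (val_modp_mulh _ (sd _)); rewrite lteD2rE // gt.
exact: val_divp_mulh.
Qed.

Lemma leading_qexp_mul_expQh g i : (size g < size Q)%N -> g != 0%R ->
  leading_qexp g i (g * (Q + h) ^+ i)%R.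
Proof.
move=> sg g0; elim: i => [|i IH]; first by rewrite expr0 mulr1; apply: leading_qexp0.
by rewrite exprSr mulrA; apply: leading_qexpM.
Qed.

Lemma trunc_leading_qexp g i P : leading_qexp g i P -> trunc nu Q P = nu (g * Q ^+ i)%R.
Proof.
move=> [ge _ approx]; apply/le_anti; rewrite le_trunc // andbT.
apply: le_trans (trunc_le_val _ i) _.
by rewrite -[qexp Q P i](subrK g) mulrDl addrC valD_lt_eq.
Qed.

Lemma trunc_mul_expQh g i : (size g < size Q)%N ->
  trunc nu Q (g * (Q + h) ^+ i)%R = nu (g * Q ^+ i)%R.
Proof.
move=> sg; have [->|g0] := eqVneq g 0%R; first by rewrite !mul0r trunc0 val0.
exact/trunc_leading_qexp/leading_qexp_mul_expQh.
Qed.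

Lemma val_qexp_sum_leading N (g : nat -> {poly K}) i1 : (i1 < N)%N ->
  (forall i, (size (g i) < size Q)%N) -> g i1 != 0%R ->
  (forall i, (i < N)%N -> nu (g i1 * Q ^+ i1)%R <= nu (g i * Q ^+ i)%R) ->
  (forall i, (i1 < i < N)%N -> nu (g i1 * Q ^+ i1)%R < nu (g i * Q ^+ i)%R) ->
  nu (qexp Q (\sum_(i < N) g i * (Q + h) ^+ i) i1 * Q ^+ i1)%R = nu (g i1 * Q ^+ i1)%R.
Proof.
move=> i1N sg g0 min_i1 max_i1; set m := nu (g i1 * Q ^+ i1)%R.
have /fin_numP[_ m_fin] : m \is a fin_num by exact: val_mul_expQ_fin.
have [_ _ approx] := leading_qexp_mul_expQh i1 (sg i1) g0.
rewrite qexp_sum (bigD1 (Ordinal i1N)) //=.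
set D := qexp Q _ i1; rewrite -[D](subrK (g i1)) addrAC addrC 2!mulrDl.
rewrite valD_lt_eq //; apply: (lt_valD nu_val) => //.
rewrite big_distrl /=; apply: (lt_val_sum nu_val); rewrite ?ltey // => i ne_i_i1.
have {ne_i_i1} ne_i_i1 : (i : nat) != i1 by apply: contraNneq ne_i_i1 => e; apply/eqP/val_inj.
have [->|gi0] := eqVneq (g i) 0%R; first by rewrite !mul0r qexp0p mul0r val0 // ltey.
have [ge gt _] := leading_qexp_mul_expQh i (sg i) gi0.
have [lt_i_i1|lt_i1_i] := ltnP i i1; first exact: le_lt_trans (min_i1 _ (ltn_ord i)) (gt _ lt_i_i1).
apply: lt_le_trans (max_i1 i _) (ge _).
by rewrite ltn_ord andbT ltn_neqAle eq_sym ne_i_i1.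
Qed.

Lemma trunc_sum_expQh N (g : nat -> {poly K}) : (forall i, (size (g i) < size Q)%N) ->
  trunc nu Q (\sum_(i < N) g i * (Q + h) ^+ i)%R =
  \big[mine/+oo]_(i < N) nu (g i * Q ^+ i)%R.
Proof.
move=> sg; set m := \big[mine/+oo]_(i < N) _.
have m_le i : (i < N)%N -> m <= nu (g i * Q ^+ i)%R.
  by move=> iN; exact: (bigmin_le _ (Ordinal iN) (fun i : 'I_N => nu (g i * Q ^+ i)%R)).
apply/le_anti/andP; split; last first.
  apply: le_trunc => k; rewrite qexp_sum big_distrl; apply: (le_val_sum nu_val) => i _.
  by apply: le_trans (m_le i (ltn_ord i)) _; rewrite -trunc_mul_expQh // trunc_le_val.
have [->|m_fin] := eqVneq m +oo; first exact: leey.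
have N0 : (0 < N)%N by move: m_fin; rewrite /m; case: (N) => //; rewrite big_ord0 eqxx.
have [i0 _ m_i0] := @eq_bigmin _ _ _ +oo (Ordinal N0) xpredT
   (fun i : 'I_N => nu (g i * Q ^+ i)%R) isT (fun i _ => leey _).
have attained : exists i, (i < N)%N && (nu (g i * Q ^+ i)%R == m).
  by exists i0; rewrite ltn_ord /m m_i0 eqxx.
have bounded i : (i < N)%N && (nu (g i * Q ^+ i)%R == m) -> (i <= N)%N.
  by case/andP => /ltnW.
have [i1 /andP[i1N /eqP m_i1] i1_max] := ex_maxnP attained bounded.
have g0 : g i1 != 0%R by apply: contraNneq m_fin => gi10; rewrite -m_i1 gi10 mul0r val0.
apply: le_trans (trunc_le_val _ i1) _; rewrite val_qexp_sum_leading // ?m_i1 //.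
move=> i /andP[lt_i1_i iN]; rewrite lt_neqAle m_le // andbT.
by apply: contraTneq lt_i1_i => m_i; rewrite -leqNgt i1_max // iN m_i eqxx.
Qed.

End KeyPolynomial.

Theorem lemma2p2 (K : fieldType) (R : realType) (nu : {poly K} -> \bar R)
  (n : nat) (Q Q' f : {poly K}) :
  is_valuation nu -> (1 <= n)%N ->
  key_poly nu Q -> key_poly nu Q' ->
  size Q = n.+1 -> size Q' = n.+1 ->
  nu Q < nu Q' ->
  trunc nu Q f = \big[mine/+oo]_(i < size f) trunc nu Q (qexp Q' f i * Q' ^+ i)%R.
Proof.
move=> nu_val n_gt0 Qkey Q'key sQ sQ' lt_QQ'.
have Qsize : (1 < size Q)%N by rewrite sQ.
have Q'size : (1 < size Q')%N by rewrite sQ'.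
pose h := (Q' - Q)%R.
have hsize : (size h < size Q)%N.
  by rewrite sQ -sQ' size_sub_monic ?sQ ?sQ' //; [case: Q'key | case: Qkey].
have Q_le_h : nu Q <= nu h by rewrite le_valB // ltW.
have Q'E : Q' = (Q + h)%R by rewrite addrC subrK.
have sg i : (size (qexp Q' f i) < size Q)%N by rewrite sQ -sQ' size_qexp.
rewrite {1}(qexp_expansion Q'size f); clearbody h; subst Q'.
rewrite trunc_sum_expQh //; apply: eq_bigr => i _.
by rewrite trunc_mul_expQh.
Qed.
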